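(* Let $p$ be an odd prime, $n,s,m\ge2$, and $a,b,c,d,e,f\in\mathbb{Z}_p\setminus\{0\}$ such that each of the pairs $(a,b),(c,d),(e,f)$ satisfies the quadratic reciprocity law; put $k_s=k(a,b)$, $k_n=k(c,d)$, $k_m=k(e,f)$. Suppose that the reductions modulo $p$ of $g_n,g_s,g_m$ are irreducible over $\mathbb{Z}_p$. Let $\mathbb{E}$ be the splitting field of these three polynomials over $\mathbb{Z}_p$, and let $\lambda_1,\dots,\lambda_n$, $\kappa_1,\dots,\kappa_s$, $\iota_1,\dots,\iota_m$ be the roots in $\mathbb{E}$ of $g_n,g_s,g_m$ (mod $p$), respectively. Then over $\mathbb{E}$, $$ T_{RN}\sim\mathrm{diag}\big(k_n\lambda_i+k_s\kappa_j+k_m\iota_\ell\big)_{1\le i\le n,\,1\le j\le s,\,1\le \ell\le m}. $$ Moreover, if $T_{RN}$ is invertible, then $T_{RN}^{-1}\sim\mathrm{diag}\big((k_n\lambda_i+k_s\kappa_j+k_m\iota_\ell)^{-1}\big)_{i,j,\ell}$ over $\mathbb{E}$.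
   Context: For $k\ge1$ and $t_1,t_2\in\mathbb{Z}_p$, $S_k(t_1,t_2)$ is the $k\times k$ tridiagonal matrix with zeros on the main diagonal, every subdiagonal entry (positions $(i+1,i)$) equal to $t_1$, and every superdiagonal entry (positions $(i,i+1)$) equal to $t_2$. $I_r$ is the $r\times r$ identity and $\otimes$ the Kronecker product. $M_s=I_s\otimes S_n(c,d)+S_s(a,b)\otimes I_n$ and $T_{RN}=I_m\otimes M_s+S_m(f,e)\otimes I_{ns}$. For $j\ge0$, $g_j(x)=\sum_{i=0}^{\lfloor j/2\rfloor}(-1)^i\binom{j-i}{i}x^{j-2i}$. A pair $(t_1,t_2)\in\mathbb{Z}_p\times\mathbb{Z}_p$ satisfies the quadratic reciprocity law if either $t_1=t_2$, or $t_1t_2\equiv t^2\pmod p$ for some $t\in\mathbb{Z}_p$. For such a pair, $k(t_1,t_2)=t_1$ if $t_1=t_2$, and otherwise $k(t_1,t_2)=\min\{t\in\{0,\dots,p-1\}:t^2\equiv t_1t_2\pmod p\}$. $\sim$ denotes similarity of matrices over $\mathbb{E}$. *)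

From HB Require Import structures.
From mathcomp Require Import all_boot all_order all_algebra all_field.
Set Implicit Arguments. Unset Strict Implicit. Unset Printing Implicit Defensive.
Import Order.TTheory GRing.Theory.
Local Open Scope ring_scope.

Lemma kron_div_ltn m n (k : 'I_(m * n)) : (k %/ n < m)%N.
Proof.
case: n k => [|n] k; first by case: k => k /=; rewrite muln0.
by rewrite ltn_divLR // mulnC; exact: ltn_ord.
Qed.

Lemma kron_mod_ltn m n (k : 'I_(m * n)) : (k %% n < n)%N.
Proof.
case: n k => [|n] k; first by case: k => k /=; rewrite muln0.
by rewrite ltn_mod.
Qed.

Definition kdiv m n (k : 'I_(m * n)) : 'I_m := Ordinal (kron_div_ltn k).
Definition kmod m n (k : 'I_(m * n)) : 'I_n := Ordinal (kron_mod_ltn k).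

(* A (x) B, with (A (x) B)_{(i1,i2),(j1,j2)} = A_{i1 j1} * B_{i2 j2},
   where the pair (i1,i2) is encoded as i1 * m2 + i2. *)
Definition kron (R : nzRingType) m1 n1 m2 n2
    (A : 'M[R]_(m1, n1)) (B : 'M[R]_(m2, n2)) : 'M[R]_(m1 * m2, n1 * n2) :=
  \matrix_(i, j) (A (kdiv i) (kdiv j) * B (kmod i) (kmod j)).

Definition Smx (R : nzRingType) (k : nat) (t1 t2 : R) : 'M[R]_k :=
  \matrix_(i, j) (if (val i == (val j).+1)%N then t1
                  else if (val j == (val i).+1)%N then t2 else 0).

Definition Mmx (R : nzRingType) (n s : nat) (a b c d : R) : 'M[R]_(s * n) :=
  kron (1%:M : 'M[R]_s) (Smx n c d) + kron (Smx s a b) (1%:M : 'M[R]_n).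

Definition TRN (R : nzRingType) (n s m : nat) (a b c d e f : R)
    : 'M[R]_(m * (s * n)) :=
  kron (1%:M : 'M[R]_m) (Mmx n s a b c d)
  + kron (Smx m f e) (1%:M : 'M[R]_(s * n)).

Definition gpoly (R : nzRingType) (j : nat) : {poly R} :=
  \sum_(i < (j./2).+1) (((-1) ^+ i * ('C(j - i, i))%:R) *: 'X^(j - 2 * i)).

Definition QRlaw (p : nat) (t1 t2 : 'F_p) : Prop :=
  t1 = t2 \/ exists t : 'F_p, t1 * t2 = t ^+ 2.

(* k(t1,t2) = t1 if t1 = t2, otherwise the least t in {0,...,p-1} with
   t^2 = t1 t2 (mod p); find returns that least index in iota 0 p, which
   equals the value itself. *)
Definition kfun (p : nat) (t1 t2 : 'F_p) : 'F_p :=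
  if t1 == t2 then t1
  else (find (fun t : nat => (t%:R : 'F_p) ^+ 2 == t1 * t2) (iota 0 p))%:R.

From mathcomp Require Import all_boot all_order all_algebra all_field.
From mathcomp Require Import ring zify.
Import GRing.Theory.
Local Open Scope ring_scope.
Set Implicit Arguments. Unset Strict Implicit. Unset Printing Implicit Defensive.

(* Write [t ^+ 2 = t1 * t2] with [t = k(t1,t2)] and put [r = t2 / t].  Since
   [g_(j+2) = X g_(j+1) - g_j], for every root [mu] of [g_k] the row
   [(r ^ i * g_i(mu))_i] is a left eigenvector of [S_k(t1,t2)] for [t * mu].  An
   irreducible polynomial over a finite field is separable, so the [k] roots are
   distinct and these rows form an invertible (Vandermonde-like) matrix: [S_k(t1,t2)]
   is diagonalizable.  Both [M_s] and [T_RN] are Kronecker sums [I (x) A + B (x) I],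
   which the Kronecker product of the base changes of [A] and [B] diagonalizes, with
   the sums of eigenvalues on the diagonal; the same base change diagonalizes the
   inverse. *)

Section GPoly.
Variable R : comNzRingType.

Definition gpoly_term (j i : nat) : {poly R} :=
  ((-1) ^+ i * ('C(j - i, i))%:R) *: 'X^(j - 2 * i).

Lemma gpoly_widen j N : (j./2 < N)%N -> gpoly R j = \sum_(i < N) gpoly_term j i.
Proof.
move=> ltjN; rewrite /gpoly (big_ord_widen N (gpoly_term j)) // big_mkcond /=.
apply: eq_bigr => i _; case: ifP => // /negbT; rewrite -leqNgt => lt_half_i.
rewrite /gpoly_term bin_small ?mulr0 ?scale0r //.
have := odd_double_half j; rewrite -addnn; lia.
Qed.

Lemma gpoly_termSS j i :
  gpoly_term j.+2 i.+1 = gpoly_term j.+1 i.+1 * 'X - gpoly_term j i.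
Proof.
rewrite /gpoly_term -!mul_polyC.
have -> : (j.+2 - 2 * i.+1 = j - 2 * i)%N by lia.
have -> : (j.+1 - 2 * i.+1 = j - (2 * i).+1)%N by lia.
rewrite !subSS; have [le_ij|lt_ji] := leqP i j; last first.
  rewrite !bin_small; try lia.
  by rewrite !mulr0 !polyC0 !mul0r; ring.
rewrite subSn // binS natrD !rmorphM !rmorphD !rmorphXn !rmorphN1 /= exprS.
have [lt_2i_j|le_j_2i] := ltnP (2 * i) j.
  have -> : (j - 2 * i = (j - (2 * i).+1).+1)%N by lia.
  rewrite exprS; ring.
rewrite (@bin_small (j - i)); last by lia.
rewrite polyC0; ring.
Qed.

Lemma gpoly0 : gpoly R 0 = 1.
Proof. by rewrite /gpoly big_ord1 /= expr0 mul1r scale1r expr0. Qed.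

Lemma gpoly1 : gpoly R 1 = 'X.
Proof. by rewrite /gpoly big_ord1 /= expr0 mul1r scale1r expr1. Qed.

Lemma gpolySS j : gpoly R j.+2 = gpoly R j.+1 * 'X - gpoly R j.
Proof.
have half_lt k : (k./2 < k.+1)%N by have := half_leq (leqnSn k); lia.
rewrite (@gpoly_widen j.+2 j.+3) // (@gpoly_widen j.+1 j.+3); last first.
  by apply: leq_trans (half_lt j.+1) _.
rewrite (@gpoly_widen j j.+2); last by apply: leq_trans (half_lt j) _.
rewrite big_ord_recl [X in _ = X * _ - _]big_ord_recl mulrDl mulr_suml.
under eq_bigr => i _ do rewrite /bump /= ?add1n gpoly_termSS.
rewrite sumrB /gpoly_term !subn0 !bin0 !mulr1 !scale1r -exprSr; ring.
Qed.

Lemma gpoly_monic_size j : gpoly R j \is monic /\ size (gpoly R j) = j.+1.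
Proof.
suff [] : (gpoly R j \is monic /\ size (gpoly R j) = j.+1) /\
          (gpoly R j.+1 \is monic /\ size (gpoly R j.+1) = j.+2) by [].
elim: j => [|j [[_ size_j] [monic_j1 size_j1]]].
  by rewrite gpoly1 gpoly0 monic1 monicX size_poly1 size_polyX.
have size_X : size (gpoly R j.+1 * 'X) = j.+3.
  by rewrite size_mulX ?monic_neq0 // size_j1.
have size_j_lt : (size (- gpoly R j) < size (gpoly R j.+1 * 'X)%R)%N.
  by rewrite size_polyN size_X size_j.
split; first by split.
rewrite gpolySS; split; last by rewrite size_polyDl // size_X.
by apply/monicP; rewrite lead_coefDl // lead_coefMX; apply/monicP.
Qed.

Lemma coef_gpoly_gt j l : (j < l)%N -> (gpoly R j)`_l = 0.
Proof. by move=> lt_jl; rewrite nth_default // (gpoly_monic_size j).2. Qed.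

Lemma coef_gpoly_deg j : (gpoly R j)`_j = 1.
Proof.
have [/monicP lead_j size_j] := gpoly_monic_size j.
by rewrite -lead_j lead_coefE size_j.
Qed.

End GPoly.

Lemma map_gpoly (R S : comNzRingType) (f : {rmorphism R -> S}) j :
  map_poly f (gpoly R j) = gpoly S j.
Proof.
rewrite /gpoly rmorph_sum; apply: eq_bigr => i _.
by rewrite /= map_polyZ map_polyXn rmorphM rmorphXn rmorphN1 rmorph_nat.
Qed.

Lemma kpair_subproof m n (i : 'I_m) (j : 'I_n) : (i * n + j < m * n)%N.
Proof.
have : (i.+1 * n <= m * n)%N by rewrite leq_mul2r ltn_ord orbT.
by rewrite mulSn; have := ltn_ord j; lia.
Qed.

Definition kpair m n (i : 'I_m) (j : 'I_n) : 'I_(m * n) := Ordinal (kpair_subproof i j).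

Lemma kdiv_pair m n (i : 'I_m) (j : 'I_n) : kdiv (kpair i j) = i.
Proof.
by apply: val_inj => /=; rewrite divnMDl ?divn_small ?addn0 //; have := ltn_ord j; lia.
Qed.

Lemma kmod_pair m n (i : 'I_m) (j : 'I_n) : kmod (kpair i j) = j.
Proof. by apply: val_inj => /=; rewrite modnMDl modn_small. Qed.

Lemma kpairK m n (k : 'I_(m * n)) : kpair (kdiv k) (kmod k) = k.
Proof. by apply: val_inj => /=; rewrite -divn_eq. Qed.

Lemma eq_kord m n (k l : 'I_(m * n)) :
  (k == l) = (kdiv k == kdiv l) && (kmod k == kmod l).
Proof.
apply/eqP/andP => [-> //|[/eqP eq_div /eqP eq_mod]].
by rewrite -(kpairK k) -(kpairK l) eq_div eq_mod.
Qed.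

Lemma big_kord (R : nmodType) m n (G : 'I_m -> 'I_n -> R) :
  \sum_(k < m * n) G (kdiv k) (kmod k) = \sum_(i < m) \sum_(j < n) G i j.
Proof.
rewrite pair_big /= (reindex (fun ij : 'I_m * 'I_n => kpair ij.1 ij.2)) /=.
  by apply: eq_bigr => -[i j] _; rewrite kdiv_pair kmod_pair.
by exists (fun k => (kdiv k, kmod k)) => [[i j] _|k _]; rewrite ?kdiv_pair ?kmod_pair ?kpairK.
Qed.

Section Kronecker.
Variable R : comNzRingType.

Lemma kron_mul m1 n1 p1 m2 n2 p2 (A : 'M[R]_(m1, n1)) (B : 'M[R]_(m2, n2))
    (C : 'M[R]_(n1, p1)) (D : 'M[R]_(n2, p2)) :
  kron A B *m kron C D = kron (A *m C) (B *m D).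
Proof.
apply/matrixP => i j; rewrite !mxE big_distrlr /= -big_kord.
by apply: eq_bigr => k _; rewrite !mxE mulrACA.
Qed.

Lemma kron_diag m n (d1 : 'rV[R]_m) (d2 : 'rV[R]_n) :
  kron (diag_mx d1) (diag_mx d2) = diag_mx (\row_k (d1 0 (kdiv k) * d2 0 (kmod k))).
Proof.
apply/matrixP => i j; rewrite !mxE eq_kord.
by case: eqP => [->|]; case: eqP => [->|] //=; rewrite ?mulr0 ?mul0r.
Qed.

Lemma kron1 m n : kron (1%:M : 'M[R]_m) (1%:M : 'M[R]_n) = 1%:M.
Proof.
rewrite -!diag_const_mx kron_diag; congr diag_mx.
by apply/rowP => k; rewrite !mxE mulr1.
Qed.

End Kronecker.

Lemma kron_unit (R : comUnitRingType) m n (A : 'M[R]_m) (B : 'M[R]_n) :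
  A \in unitmx -> B \in unitmx -> kron A B \in unitmx.
Proof.
move=> unitA unitB.
have inv_AB : kron A B *m kron (invmx A) (invmx B) = 1%:M.
  by rewrite kron_mul !mulmxV // kron1.
by case: (mulmx1_unit inv_AB).
Qed.

Section Similarity.
Variable F : fieldType.

Lemma similar_in_kron_sum m n (A1 : 'M[F]_m) (A2 : 'M[F]_n) d1 d2 :
  similar_in unitmx A1 (diag_mx (\row_i d1 i)) ->
  similar_in unitmx A2 (diag_mx (\row_j d2 j)) ->
  similar_in unitmx (kron 1%:M A2 + kron A1 1%:M)
    (diag_mx (\row_k (d1 (kdiv k) + d2 (kmod k)))).
Proof.
move=> [P1 unitP1 /(similarP unitP1) simP1] [P2 unitP2 /(similarP unitP2) simP2].
have unitP := kron_unit unitP1 unitP2.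
exists (kron P1 P2) => //; apply/similarP => //.
have -> : diag_mx (\row_k (d1 (kdiv k) + d2 (kmod k))) =
    kron 1%:M (diag_mx (\row_j d2 j)) + kron (diag_mx (\row_i d1 i)) 1%:M.
  rewrite -!diag_const_mx !kron_diag -raddfD /=; congr diag_mx.
  by apply/rowP => k; rewrite !mxE mul1r mulr1 addrC.
by rewrite mulmxDr mulmxDl !kron_mul simP1 simP2 !mulmx1 !mul1mx addrC.
Qed.

Lemma invmx_diag n (d : 'rV[F]_n) : diag_mx d \in unitmx ->
  invmx (diag_mx d) = diag_mx (\row_i (d 0 i)^-1).
Proof.
move=> unitD; have := unitD; rewrite unitmxE det_diag unitfE => /prodf_neq0 d_neq0.
have inv_d : diag_mx d *m diag_mx (\row_i (d 0 i)^-1) = 1%:M.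
  apply/matrixP => i j; rewrite mul_diag_mx !mxE.
  by case: eqP => [->|_]; rewrite ?mulr0 // mulr1n divff ?d_neq0.
by rewrite -[LHS]mulmx1 -inv_d mulmxA mulVmx ?mul1mx.
Qed.

Lemma similar_unitmx n (P A D : 'M[F]_n) : P \in unitmx ->
  similar P A D -> (A \in unitmx) = (D \in unitmx).
Proof.
move=> unitP /(similarP unitP) simP.
by move: (unitmx_mul P A); rewrite simP !unitmx_mul unitP andbT.
Qed.

Lemma similar_invmx n (P A D : 'M[F]_n) : P \in unitmx -> A \in unitmx ->
  similar P A D -> similar P (invmx A) (invmx D).
Proof.
move=> unitP unitA simPAD; have unitD : D \in unitmx by rewrite -(similar_unitmx unitP simPAD).
move/(similarP unitP): simPAD => simP; apply/similarP => //.
by rewrite -[RHS](mulmxK unitA) -(mulmxA _ P) simP mulmxA mulVmx ?mul1mx.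
Qed.

Lemma similar_in_invmx_diag n (A : 'M[F]_n) (d : 'I_n -> F) : A \in unitmx ->
  similar_in unitmx A (diag_mx (\row_i d i)) ->
  similar_in unitmx (invmx A) (diag_mx (\row_i (d i)^-1)).
Proof.
move=> unitA [P unitP simP]; exists P => //.
have -> : \row_i (d i)^-1 = \row_i ((\row_j d j) 0 i)^-1 by apply/rowP => i; rewrite !mxE.
by rewrite -invmx_diag -?(similar_unitmx unitP simP) // similar_invmx.
Qed.

End Similarity.

Section TridiagonalAction.
Variable R : comNzRingType.

Lemma sum_ord_delta k c (y : nat -> R) :
  \sum_(l < k) (l == c :> nat)%:R * y l = (c < k)%:R * y c.
Proof.
have [lt_ck|le_kc] := ltnP c k.
  rewrite (bigD1 (Ordinal lt_ck)) //= eqxx big1 ?addr0 // => l ne_lc.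
  rewrite (_ : (l == c :> nat) = false) ?mul0r //.
  by apply: contraNF ne_lc => /eqP eq_lc; apply/eqP/val_inj.
rewrite mul0r big1 // => l _; rewrite (_ : (l == c :> nat) = false) ?mul0r //.
by apply/negbTE; rewrite neq_ltn (leq_trans (ltn_ord l) le_kc).
Qed.

Lemma Smx_entry k (t1 t2 : R) (l i : 'I_k) :
  Smx k t1 t2 l i =
  (l == i.+1 :> nat)%:R * t1 + (l == i.-1 :> nat)%:R * ((0 < i)%N%:R * t2).
Proof.
rewrite mxE /=; have [->|ne1] := eqVneq (l : nat) i.+1.
  by rewrite mul1r (_ : (i.+1 == i.-1)%N = false) ?mul0r ?addr0 //; lia.
rewrite mul0r add0r; have [->|ne2] := eqVneq (i : nat) l.+1; first by rewrite eqxx !mul1r.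
have [->|i_gt0] := posnP i; first by rewrite mul0r mulr0.
by rewrite (_ : (l == i.-1 :> nat) = false) ?mul0r //; lia.
Qed.

(* [w l.+1] is the [l]-th entry of the row vector, padded by [w 0 = w k.+1 = 0]. *)
Lemma Smx_mulmx_row k (t1 t2 : R) (w : nat -> R) (i : 'I_k) :
  w 0%N = 0 -> w k.+1 = 0 ->
  \sum_(l < k) w l.+1 * Smx k t1 t2 l i = t1 * w i.+2 + t2 * w i.
Proof.
move=> w0 wk.
under eq_bigr => l _ do rewrite Smx_entry mulrDr.
rewrite big_split /=.
under eq_bigr => l _ do rewrite mulrCA.
under [X in _ + X]eq_bigr => l _ do rewrite mulrCA.
rewrite (sum_ord_delta _ _ (fun l => w l.+1 * t1)).
rewrite (sum_ord_delta _ _ (fun l => w l.+1 * ((0 < i)%N%:R * t2))).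
have -> : (i.-1 < k)%N by apply: leq_ltn_trans (leq_pred _) (ltn_ord i).
have -> : (i.+1 < k)%:R * (w i.+2 * t1) = t1 * w i.+2.
  case: ltnP => [_|le_k_i1]; first by rewrite mul1r mulrC.
  have -> : i.+2 = k.+1 by have := ltn_ord i; lia.
  by rewrite wk mul0r !mulr0.
by case: (nat_of_ord i) => [|i'] /=; rewrite ?w0; ring.
Qed.

Definition gpoly_eigmx k (r : R) (mu : 'I_k -> R) : 'M[R]_k :=
  \matrix_(j, i) (r ^+ i * (gpoly R i).[mu j]).

Lemma gpoly_eigmx_mulSmx k (t1 t2 t r : R) (mu : 'I_k -> R) :
  r * t1 = t -> r * t = t2 -> (forall j, (gpoly R k).[mu j] = 0) ->
  gpoly_eigmx r mu *m Smx k t1 t2 = diag_mx (\row_j (t * mu j)) *m gpoly_eigmx r mu.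
Proof.
move=> rt1 rt roots; apply/matrixP => j i; rewrite mul_diag_mx !mxE.
pose w l := if l is l'.+1 then r ^+ l' * (gpoly R l').[mu j] else 0.
transitivity (\sum_(l < k) w l.+1 * Smx k t1 t2 l i).
  by apply: eq_bigr => l _; rewrite mxE.
rewrite Smx_mulmx_row /w ?roots ?mulr0 //.
case: (nat_of_ord i) => [|i'].
  by rewrite gpoly1 gpoly0 hornerX hornerC -rt1; ring.
by rewrite gpolySS hornerD hornerN hornerMX -rt -rt1 !exprS; ring.
Qed.

End TridiagonalAction.

Section Tridiagonal.
Variable F : fieldType.

Lemma gpoly_eigmx_unit k (r : F) (mu : 'I_k -> F) :
  r != 0 -> injective mu -> gpoly_eigmx r mu \in unitmx.
Proof.
(* Vandermonde in the roots, times the unitriangular coefficient matrix of the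
   monic [g_i], times [diag (r ^+ i)]. *)
move=> r_neq0 mu_inj.
pose C : 'M[F]_k := \matrix_(l, i) (gpoly F i)`_l.
have -> : gpoly_eigmx r mu =
    (Vandermonde k (\row_j mu j))^T *m C *m diag_mx (\row_i r ^+ i).
  apply/matrixP => j i; rewrite mul_mx_diag !mxE mulrC; congr (_ * _).
  rewrite (@horner_coef_wide _ k); last by rewrite (gpoly_monic_size _ i).2.
  by apply: eq_bigr => l _; rewrite !mxE mulrC.
have det_C : \det C = 1.
  rewrite -det_tr det_trig; last by apply/is_trig_mxP => i l lt_il; rewrite !mxE coef_gpoly_gt.
  by apply: big1 => i _; rewrite !mxE coef_gpoly_deg.
rewrite unitmxE !det_mulmx det_tr det_Vandermonde det_diag det_C mulr1 unitfE.
rewrite mulf_neq0 //; last by apply/prodf_neq0 => i _; rewrite mxE expf_neq0.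
apply/prodf_neq0 => i _; apply/prodf_neq0 => j lt_ij.
by rewrite !mxE subr_eq0; apply: contraTneq lt_ij => /mu_inj ->; rewrite ltnn.
Qed.

Lemma Smx_diagonalizable k (t1 t2 t : F) (mu : 'I_k -> F) :
  t1 != 0 -> t2 != 0 -> t ^+ 2 = t1 * t2 -> injective mu ->
  (forall j, (gpoly F k).[mu j] = 0) ->
  similar_in unitmx (Smx k t1 t2) (diag_mx (\row_j (t * mu j))).
Proof.
move=> t1_neq0 t2_neq0 sq_t mu_inj roots.
have t_neq0 : t != 0.
  by apply: contra_neq (mulf_neq0 t1_neq0 t2_neq0) => t0; rewrite -sq_t t0 expr0n.
have rt1 : t2 / t * t1 = t by rewrite mulrAC (mulrC t2) -sq_t expr2 mulfK.
have rt : t2 / t * t = t2 by rewrite divfK.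
have unitQ : gpoly_eigmx (t2 / t) mu \in unitmx.
  by apply: gpoly_eigmx_unit; rewrite // mulf_neq0 ?invr_eq0.
exists (gpoly_eigmx (t2 / t) mu) => //; apply/similarP => //.
exact: gpoly_eigmx_mulSmx.
Qed.

End Tridiagonal.

Section MapTRN.
Variables (R S : nzRingType) (f : {rmorphism R -> S}).

Lemma map_kron m1 n1 m2 n2 (A : 'M[R]_(m1, n1)) (B : 'M[R]_(m2, n2)) :
  map_mx f (kron A B) = kron (map_mx f A) (map_mx f B).
Proof. by apply/matrixP => i j; rewrite !mxE rmorphM. Qed.

Lemma map_Smx k t1 t2 : map_mx f (Smx k t1 t2) = Smx k (f t1) (f t2).
Proof.
by apply/matrixP => i j; rewrite !mxE; case: eqP => // _; case: eqP => // _; rewrite rmorph0.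
Qed.

Lemma map_Mmx n s a b c d :
  map_mx f (Mmx n s a b c d) = Mmx n s (f a) (f b) (f c) (f d).
Proof. by rewrite /Mmx map_mxD !map_kron !map_mx1 !map_Smx. Qed.

Lemma map_TRN n s m a b c d e g :
  map_mx f (TRN n s m a b c d e g) =
  TRN n s m (f a) (f b) (f c) (f d) (f e) (f g).
Proof. by rewrite /TRN map_mxD !map_kron !map_mx1 map_Mmx map_Smx. Qed.

End MapTRN.

Lemma kfun_sqr p t1 t2 : prime p -> QRlaw t1 t2 -> kfun t1 t2 ^+ 2 = t1 * t2 :> 'F_p.
Proof.
rewrite /kfun => p_pr; case: eqP => [-> _|_ [//|[t sq_t]]]; first by rewrite expr2.
set P := (fun i : nat => _); have has_P : has P (iota 0 p).
  apply/hasP; exists (val t); last by rewrite /P natr_Zp sq_t.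
  by rewrite mem_iota add0n /=; have := ltn_ord t; rewrite {2}(Fp_cast p_pr).
have := has_find P (iota 0 p); rewrite has_P size_iota => lt_find.
by have := nth_find 0 has_P; rewrite nth_iota ?add0n // => /eqP.
Qed.

Lemma irreducible_roots_uniq (F : finFieldType) (L : fieldExtType F) (g : {poly F})
    (rs : seq L) : irreducible_poly g ->
  map_poly (in_alg L) g = \prod_(x <- rs) ('X - x%:P) -> uniq rs.
Proof.
(* [g] shares a root with the separable polynomial [X^#|L| - X], hence divides it. *)
move=> irr_g split_g; case: rs split_g => [//|x rs] split_g.
pose finL := FinFieldExtType L.
pose h : {poly F} := 'X^#|finL| - 'X.
have map_h : map_poly (in_alg L) h = \prod_(y <- enum finL) ('X - y%:P).
  by rewrite rmorphB /= map_polyXn map_polyX (finField_genPoly finL) -big_enum.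
have root_g : root (map_poly (in_alg L) g) x by rewrite split_g root_prod_XsubC mem_head.
have root_h : root (map_poly (in_alg L) h) x.
  by rewrite map_h root_prod_XsubC (mem_enum finL).
have dvd_gh : g %| h.
  have [gcd_1|gcd_g] := irredp_XsubCP irr_g (dvdp_gcdl g h); last first.
    by rewrite -(eqp_dvdl _ gcd_g) dvdp_gcdr.
  have : coprimep g h by rewrite /coprimep (eqp_size gcd_1) size_poly1.
  rewrite -(coprimep_map (in_alg L)) => /coprimep_root/(_ root_g).
  by rewrite -rootE root_h.
have : separable_poly (map_poly (in_alg L) g).
  apply: (@dvdp_separable _ (map_poly (in_alg L) h)); first by rewrite dvdp_map.
  by rewrite map_h separable_prod_XsubC (enum_uniq finL).
by rewrite split_g separable_prod_XsubC.
Qed.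

Lemma Smx_similar_gpoly_roots (F : finFieldType) (L : fieldExtType F) k
    (t1 t2 t : F) (mu : 'I_k -> L) :
  t1 != 0 -> t2 != 0 -> t ^+ 2 = t1 * t2 -> irreducible_poly (gpoly F k) ->
  map_poly (in_alg L) (gpoly F k) = \prod_(i < k) ('X - (mu i)%:P) ->
  similar_in unitmx (Smx k (in_alg L t1) (in_alg L t2))
    (diag_mx (\row_j (in_alg L t * mu j))).
Proof.
move=> t1_neq0 t2_neq0 sq_t irr_g split_g.
have mu_inj : injective mu.
  apply/injectiveP/(irreducible_roots_uniq irr_g).
  by rewrite split_g big_map big_enum.
apply: Smx_diagonalizable mu_inj _; rewrite ?fmorph_eq0 // -?rmorphXn ?sq_t ?rmorphM //.
move=> j; rewrite -(map_gpoly (in_alg L)) split_g horner_prod (bigD1 j) //=.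
by rewrite hornerXsubC subrr mul0r.
Qed.

Theorem proposition3p6 (p : nat) (Hp : prime p) (Hodd : odd p)
  (n s m : nat) (Hn : (2 <= n)%N) (Hs : (2 <= s)%N) (Hm : (2 <= m)%N)
  (a b c d e f : 'F_p)
  (Ha : a != 0) (Hb : b != 0) (Hc : c != 0) (Hd : d != 0)
  (He : e != 0) (Hf : f != 0)
  (Hab : QRlaw a b) (Hcd : QRlaw c d) (Hef : QRlaw e f)
  (Hirrn : irreducible_poly (gpoly 'F_p n))
  (Hirrs : irreducible_poly (gpoly 'F_p s))
  (Hirrm : irreducible_poly (gpoly 'F_p m))
  (E : fieldExtType 'F_p)
  (HE : splittingFieldFor 1%VS
          (map_poly (in_alg E) (gpoly 'F_p n * gpoly 'F_p s * gpoly 'F_p m))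
          fullv)
  (lam : 'I_n -> E) (kap : 'I_s -> E) (iot : 'I_m -> E)
  (Hlam : map_poly (in_alg E) (gpoly 'F_p n) = \prod_(i < n) ('X - (lam i)%:P))
  (Hkap : map_poly (in_alg E) (gpoly 'F_p s) = \prod_(j < s) ('X - (kap j)%:P))
  (Hiot : map_poly (in_alg E) (gpoly 'F_p m) = \prod_(l < m) ('X - (iot l)%:P)) :
  let ks := in_alg E (kfun a b) in
  let kn := in_alg E (kfun c d) in
  let km := in_alg E (kfun e f) in
  let T := map_mx (in_alg E) (TRN n s m a b c d e f) in
  let ev := fun q : 'I_(m * (s * n)) =>
    kn * lam (kmod (kmod q)) + ks * kap (kdiv (kmod q)) + km * iot (kdiv q) in
  similar_in unitmx T (diag_mx (\row_q ev q)) /\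
  (TRN n s m a b c d e f \in unitmx ->
     similar_in unitmx (invmx T) (diag_mx (\row_q (ev q)^-1))).
Proof.
move=> ks kn km T ev.
have simS := Smx_similar_gpoly_roots Ha Hb (kfun_sqr Hp Hab) Hirrs Hkap.
have simN := Smx_similar_gpoly_roots Hc Hd (kfun_sqr Hp Hcd) Hirrn Hlam.
have sq_fe : kfun e f ^+ 2 = f * e by rewrite kfun_sqr // mulrC.
have simM := Smx_similar_gpoly_roots Hf He sq_fe Hirrm Hiot.
have simT : similar_in unitmx T (diag_mx (\row_q ev q)).
  have -> : \row_q ev q = \row_q (km * iot (kdiv q) +
      (ks * kap (kdiv (kmod q)) + kn * lam (kmod (kmod q)))).
    by apply/rowP => q; rewrite !mxE /ev addrC (addrC (ks * _)).
  rewrite /T map_TRN /TRN /Mmx.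
  exact: similar_in_kron_sum simM (similar_in_kron_sum simS simN).
split=> [//|unitTRN].
by apply: similar_in_invmx_diag; first by rewrite map_unitmx.
Qed.
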